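(* Let $m\ge1$ and $[m]=\{1<2<\dots<m\}$. For every poset ideal $\mathcal{J}\subseteq\mathrm{Hom}([m],\mathbb{N})$ the projected letterplace ideal $L^{p_1}(\mathcal{J},[m])$ is a strongly stable ideal of $k[x_1,\dots,x_m]$, and $\mathcal{J}\mapsto L^{p_1}(\mathcal{J},[m])$ is a one-to-one correspondence between poset ideals of $\mathrm{Hom}([m],\mathbb{N})$ and strongly stable ideals of $k[x_1,\dots,x_m]$.
   Context: $\mathbb{N}=\{0,1,2,\dots\}$; $\mathrm{Hom}([m],\mathbb{N})$ is the set of weakly increasing maps $[m]\to\mathbb{N}$ ordered pointwise; $\mathcal{J}^c$ denotes the complement of $\mathcal{J}$. The ascent of $\psi$ is $\Lambda\psi=\{(a,i)\in[m]\times\mathbb{N}:\psi(q)\le i<\psi(a)\ \forall q<a\}$. $k$ is a field; the letterplace ideal $L(\mathcal{J},[m])\subseteq k[x_{a,i}:(a,i)\in[m]\times\mathbb{N}]$ is generated by $\prod_{(a,i)\in\Lambda\psi}x_{a,i}$ for $\psi\in\mathcal{J}^c$. $L^{p_1}(\mathcal{J},[m])$ is the ideal of $k[x_1,\dots,x_m]$ generated by the images of these generators under $x_{a,i}\mapsto x_a$. A monomial ideal $I$ is strongly stable if for every monomial $u$ and $i<j$, $x_ju\in I$ implies $x_iu\in I$. *)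

From HB Require Import structures.
From mathcomp Require Import all_boot all_order all_algebra.
From mathcomp Require Import mpoly.
Set Implicit Arguments. Unset Strict Implicit. Unset Printing Implicit Defensive.
Import GRing.Theory.
Local Open Scope ring_scope.

(* [m] = {1<...<m} is modelled by 'I_m = {0<...<m-1} with its natural order. *)

Definition is_hom (m : nat) (psi : 'I_m -> nat) : Prop :=
  forall a b : 'I_m, (a <= b)%N -> (psi a <= psi b)%N.

Definition hom_le (m : nat) (phi psi : 'I_m -> nat) : Prop :=
  forall a, (phi a <= psi a)%N.

Definition poset_ideal (m : nat) (J : ('I_m -> nat) -> Prop) : Prop :=
  (forall psi, J psi -> is_hom psi) /\
  (forall phi psi, is_hom phi -> J psi -> hom_le phi psi -> J phi).

Definition compl_hom (m : nat) (J : ('I_m -> nat) -> Prop) (psi : 'I_m -> nat) : Prop :=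
  is_hom psi /\ ~ J psi.

Definition ascent (m : nat) (psi : 'I_m -> nat) (a : 'I_m) (i : nat) : bool :=
  [forall q : 'I_m, (q < a)%N ==> (psi q <= i)%N] && (i < psi a)%N.

Definition ascent_count (m : nat) (psi : 'I_m -> nat) (a : 'I_m) : nat :=
  \sum_(i < psi a) ascent psi a i.

(* image of prod_{(a,i) in Lambda psi} x_{a,i} under x_{a,i} |-> x_a *)
Definition proj_gen (k : fieldType) (m : nat) (psi : 'I_m -> nat) : {mpoly k[m]} :=
  \prod_(a < m) ('X_a) ^+ (ascent_count psi a).

Definition is_ideal (k : fieldType) (m : nat) (I : {mpoly k[m]} -> Prop) : Prop :=
  I 0 /\ (forall p q, I p -> I q -> I (p + q)) /\ (forall r p, I p -> I (r * p)).

Definition ideal_gen (k : fieldType) (m : nat) (S : {mpoly k[m]} -> Prop)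
  (p : {mpoly k[m]}) : Prop :=
  forall I, is_ideal I -> (forall q, S q -> I q) -> I p.

Definition Lp1 (k : fieldType) (m : nat) (J : ('I_m -> nat) -> Prop) : {mpoly k[m]} -> Prop :=
  ideal_gen (fun q => exists psi, compl_hom J psi /\ q = proj_gen k psi).

Definition monomial_ideal (k : fieldType) (m : nat) (I : {mpoly k[m]} -> Prop) : Prop :=
  exists M : 'X_{1..m} -> Prop,
    forall p, I p <-> ideal_gen (fun q => exists mu, M mu /\ q = 'X_[mu]) p.

Definition strongly_stable (k : fieldType) (m : nat) (I : {mpoly k[m]} -> Prop) : Prop :=
  monomial_ideal I /\
  forall (u : 'X_{1..m}) (i j : 'I_m), (i < j)%N ->
    I ('X_j * 'X_[u]) -> I ('X_i * 'X_[u]).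

Arguments Lp1 k {m} J _.

From HB Require Import structures.
From mathcomp Require Import all_boot all_order all_algebra.
From mathcomp Require Import mpoly zify.
From Stdlib Require Import FunctionalExtensionality Classical.
Set Implicit Arguments. Unset Strict Implicit. Unset Printing Implicit Defensive.
Import GRing.Theory.

(* For an isotone psi the ascent Lambda psi has exactly psi(a) - max_{q<a} psi(q)
   points in column a, so p_1 sends the generator of psi to x^u where u is the
   sequence of increments of psi.  Hence monomials x^u correspond bijectively to
   isotone maps through the partial sums psum u, and divisibility v <= u implies
   psum v <= psum u pointwise.  Consequently the monomials of L^{p_1}(J) are the
   x^u with psum u outside J.  Strong stability is monotonicity in the other
   direction: multiplying by a variable or moving an exponent to a smaller
   variable raises psum u, and conversely every pointwise increase of psum u can
   be realised by such moves, one unit at a time.  So the complement of a poset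
   ideal gives a strongly stable ideal and vice versa. *)

Section MonomialIdeals.
Variables (k : fieldType) (m : nat).
Local Open Scope ring_scope.

Lemma ideal_gen_is_ideal (S : {mpoly k[m]} -> Prop) : is_ideal (ideal_gen S).
Proof.
split; first by move=> I [].
split=> [p q hp hq | r p hp] I hI hS; have [_ [hD hM]] := hI.
  by apply: hD; [apply: hp | apply: hq].
by apply: hM; apply: hp.
Qed.

Lemma ideal_gen_mem (S : {mpoly k[m]} -> Prop) q : S q -> ideal_gen S q.
Proof. by move=> hq I _; apply. Qed.

Lemma eq_ideal_gen (S1 S2 : {mpoly k[m]} -> Prop) :
  (forall q, S1 q <-> S2 q) -> forall p, ideal_gen S1 p <-> ideal_gen S2 p.
Proof. by move=> h p; split=> hp I hI hS; apply: hp => // q /h; apply: hS. Qed.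

Definition ideal_genX (M : 'X_{1..m} -> Prop) : {mpoly k[m]} -> Prop :=
  ideal_gen (fun q => exists mu, M mu /\ q = 'X_[mu]).

(* The polynomials all of whose monomials are multiples of a generator form an
   ideal containing the generators. *)
Lemma ideal_genX_X (M : 'X_{1..m} -> Prop) u :
  ideal_genX M 'X_[u] <-> exists2 v, M v & (v <= u)%MM.
Proof.
split=> [h | [v hv hvu] I [_ [_ hM]] hS]; last first.
  rewrite -(submK hvu) mpolyXD; apply: hM; apply: hS; by exists v.
pose P (p : {mpoly k[m]}) := forall mu, mu \in msupp p -> exists2 v, M v & (v <= mu)%MM.
have hP : is_ideal P.
  split; first by move=> mu; rewrite msupp0.
  split=> [p q hp hq mu /msuppD_le | r p hp mu /msuppM_le /allpairsP].
    by rewrite mem_cat => /orP [/hp | /hq].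
  case=> [[a b] [_ /hp [v hv hvb] /= ->]]; exists v => //.
  by apply: lepm_trans hvb _; rewrite addmC lem_addr.
apply: (h P hP _ u); last by rewrite msuppX inE.
move=> q [mu [hmu ->]] nu; rewrite msuppX inE => /eqP ->.
by exists mu; last exact: lepm_refl.
Qed.

Lemma monomial_ideal_is_ideal (I : {mpoly k[m]} -> Prop) :
  monomial_ideal I -> is_ideal I.
Proof.
case=> M hI; have [h0 [hD hM]] := ideal_gen_is_ideal
  (fun q => exists mu, M mu /\ q = 'X_[mu]).
split; first by apply/hI; exact: h0.
by split=> [p q /hI hp /hI hq | r p /hI hp]; apply/hI; [apply: hD | apply: hM].
Qed.

Lemma monomial_ideal_sub (I1 I2 : {mpoly k[m]} -> Prop) :
  monomial_ideal I1 -> is_ideal I2 -> (forall u, I1 'X_[u] -> I2 'X_[u]) ->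
  forall p, I1 p -> I2 p.
Proof.
move=> [M h1] hI2 hX p /h1; apply=> // q [mu [hmu ->]]; apply: hX.
by apply/h1; apply: ideal_gen_mem; exists mu.
Qed.

Lemma eq_monomial_ideal (I1 I2 : {mpoly k[m]} -> Prop) :
  monomial_ideal I1 -> monomial_ideal I2 ->
  (forall u, I1 'X_[u] <-> I2 'X_[u]) -> forall p, I1 p <-> I2 p.
Proof.
move=> h1 h2 hX p; split; apply: monomial_ideal_sub;
  by [|exact: monomial_ideal_is_ideal| move=> u /hX].
Qed.

End MonomialIdeals.

Section PartialSums.
Variable m : nat.

Definition psum (u : 'X_{1..m}) (a : 'I_m) : nat := \sum_(b < m | b <= a) u b.

Definition ascent_mnm (psi : 'I_m -> nat) : 'X_{1..m} :=
  [multinom ascent_count psi a | a < m].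

Definition prefix_max (psi : 'I_m -> nat) (a : 'I_m) : nat :=
  \max_(q < m | q < a) psi q.

Lemma sum_leq_ord n c : \sum_(i < n) (c <= i) = n - c.
Proof.
elim: n => [|n IH]; first by rewrite big_ord0.
by rewrite big_ord_recr /= IH; case: leqP => /=; lia.
Qed.

Lemma ascent_countE psi a : ascent_count psi a = psi a - prefix_max psi a.
Proof.
rewrite /ascent_count -sum_leq_ord; apply: eq_bigr => i _.
rewrite /ascent ltn_ord andbT; congr (nat_of_bool _).
apply/forallP/bigmax_leqP => h q; first by move=> hq; move: (h q); rewrite hq.
by apply/implyP; apply: h.
Qed.

Lemma prefix_max_le psi a : is_hom psi -> prefix_max psi a <= psi a.
Proof. by move=> h; apply/bigmax_leqP => q hq; apply/h/ltnW. Qed.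

Lemma psum_hom u : is_hom (psum u).
Proof.
move=> a b hab; rewrite /psum !(big_mkcond (fun i : 'I_m => i <= _)).
by apply: leq_sum => i _; do 2 case: ifP => //; lia.
Qed.

Lemma psum_le u v : (v <= u)%MM -> hom_le (psum v) (psum u).
Proof. by move=> /mnm_lepP h a; apply: leq_sum. Qed.

Lemma psum_addX u i a : psum (u + U_(i))%MM a = psum u a + (i <= a).
Proof.
rewrite /psum; under eq_bigr => b _ do rewrite mnmDE mnm1E.
rewrite big_split /=; congr (_ + _).
rewrite (big_mkcond (fun b : 'I_m => b <= a)) (bigD1 i) //= big1 ?addn0.
  by rewrite eqxx; case: ifP.
by move=> b hb; rewrite eq_sym (negbTE hb); case: ifP.
Qed.

Lemma psum_borel u (i j : 'I_m) :
  i < j -> hom_le (psum (U_(j) + u)%MM) (psum (U_(i) + u)%MM).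
Proof.
move=> hij a; rewrite ![(U_(_) + u)%MM]addmC !psum_addX.
by case: leqP; case: leqP => /=; lia.
Qed.

Lemma psum_pred u a : psum u a = \sum_(b < m | b < a) u b + u a.
Proof.
rewrite /psum (bigD1 a) //= addnC; congr (_ + _); apply: eq_bigl => b.
by rewrite ltn_neqAle andbC -val_eqE.
Qed.

Lemma prefix_max_psum u a : prefix_max (psum u) a = psum u a - u a.
Proof.
rewrite psum_pred addnK; apply/eqP; rewrite eqn_leq; apply/andP; split.
  apply/bigmax_leqP => q hq; rewrite /psum big_mkcond [X in _ <= X]big_mkcond.
  by apply: leq_sum => b _; do 2 case: ifP => //; lia.
case: (posnP a) => ha; first by rewrite big_pred0 // => b; rewrite ha.
have hq : a.-1 < m by have := ltn_ord a; lia.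
apply: leq_trans (leq_bigmax_cond (Ordinal hq) _); last by rewrite /=; lia.
by apply: eq_leq; apply: eq_bigl => b /=; lia.
Qed.

Lemma ascent_mnm_psum u : ascent_mnm (psum u) = u.
Proof.
apply/mnmP => a; rewrite mnmE ascent_countE prefix_max_psum psum_pred; lia.
Qed.

Lemma ascent_mnm_inj phi psi : is_hom phi -> is_hom psi ->
  ascent_mnm phi = ascent_mnm psi -> phi = psi.
Proof.
move=> hphi hpsi hd; apply: functional_extensionality.
suff H n (a : 'I_m) : a < n -> phi a = psi a by move=> a; apply: (H a.+1).
elim: n a => [//|n IH] a ha.
have hp : prefix_max phi a = prefix_max psi a by apply: eq_bigr => q hq; apply: IH; lia.
have := congr1 (fun u : 'X_{1..m} => u a) hd; rewrite !mnmE !ascent_countE hp.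
by have := prefix_max_le a hphi; have := prefix_max_le a hpsi; rewrite hp; lia.
Qed.

Lemma psum_ascent_mnm psi : is_hom psi -> psum (ascent_mnm psi) = psi.
Proof.
by move=> h; apply: ascent_mnm_inj => //; [apply: psum_hom | apply: ascent_mnm_psum].
Qed.

Lemma psum_inj u v : psum u =1 psum v -> u = v.
Proof.
by move=> /functional_extensionality h; rewrite -(ascent_mnm_psum u) h ascent_mnm_psum.
Qed.

Definition psum_gap (u u' : 'X_{1..m}) : nat := \sum_(b < m) (psum u' b - psum u b).

Lemma psum_gap_bump (u u' u'' : 'X_{1..m}) a :
  (forall b, psum u'' b = psum u b + (b == a)) ->
  psum u a < psum u' a -> hom_le (psum u) (psum u') ->
  hom_le (psum u'') (psum u') /\ psum_gap u'' u' < psum_gap u u'.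
Proof.
move=> h ha hle; split=> [b|].
  by rewrite h; case: eqP => [->|_] /=; [lia | rewrite addn0].
rewrite /psum_gap (bigD1 a) //= [X in _ < X](bigD1 a) //= h eqxx.
rewrite (eq_bigr (fun b => psum u' b - psum u b)); last first.
  by move=> b hb; rewrite h (negbTE hb) addn0.
by move: ha; set S := \sum_(i < m | _) _; lia.
Qed.

End PartialSums.

Section BorelClosure.
Variables (k : fieldType) (m : nat) (I : {mpoly k[m]} -> Prop).
Hypothesis I_mul : forall r p, I p -> I (r * p)%R.
Hypothesis I_borel : forall u (i j : 'I_m), i < j ->
  I ('X_j * 'X_[u])%R -> I ('X_i * 'X_[u])%R.

(* Raise psum u by one at the last position a where it is below psum u':
   by a Borel move from a+1 to a, or, if a is the last variable, by multiplying
   with x_a. *)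
Lemma borel_bump (u u' : 'X_{1..m}) (a : 'I_m) :
  hom_le (psum u) (psum u') -> psum u a < psum u' a ->
  (forall b : 'I_m, psum u b < psum u' b -> b <= a) -> I 'X_[u] ->
  exists2 u'', (forall b, psum u'' b = psum u b + (b == a)) & I 'X_[u''].
Proof.
move=> hle ha hmax hu; case: (ltnP a.+1 m) => ham; last first.
  exists (u + U_(a))%MM; last by rewrite mpolyXD mulrC; apply: I_mul.
  move=> b; rewrite psum_addX; congr (_ + _); have := ltn_ord b.
  by case: eqP => [->|/eqP]; rewrite ?leqnn // -val_eqE /=; lia.
pose a1 := Ordinal ham.
have e1 : psum u a1 = psum u a + u a1.
  rewrite psum_pred; congr (_ + _); rewrite /psum; apply: eq_bigl => b /=; lia.
have hpos : 0 < u a1.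
  have := psum_hom u' (leqnSn a : a <= a1); have := hle a1.
  have : ~~ (psum u a1 < psum u' a1) by apply/negP => /hmax /=; lia.
  by rewrite -leqNgt e1; lia.
pose w := (u - U_(a1))%MM.
have ew : u = (w + U_(a1))%MM.
  by apply/mnmP => b; rewrite mnmDE mnmBE mnm1E; case: eqP => [<-|]; lia.
exists (w + U_(a))%MM.
  move=> b; rewrite ew !psum_addX -val_eqE /=.
  by case: (leqP a b); case: (leqP a.+1 b); case: eqP => /=; lia.
rewrite mpolyXD mulrC; apply: (@I_borel w a a1 (ltnSn a)).
by rewrite ew mpolyXD mulrC in hu.
Qed.

Lemma borel_closed_psum (u u' : 'X_{1..m}) :
  hom_le (psum u) (psum u') -> I 'X_[u] -> I 'X_[u'].
Proof.
move=> hle hu; have [n hgap] : exists n, psum_gap u u' < n by exists (psum_gap u u').+1.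
elim: n u hgap hle hu => [//|n IH] u hgap hle hu.
case: (boolP [exists b, psum u b < psum u' b]) => [/existsP [b0 hb0] | hnone].
  pose strict b := psum u b < psum u' b.
  have [a ha hmax] := @arg_maxnP _ b0 strict (fun b : 'I_m => b : nat) hb0.
  have [u'' e hu''] := borel_bump hle ha hmax hu.
  have [hle'' hgap''] := psum_gap_bump e ha hle.
  by apply: (IH u'') => //; lia.
suff -> : u' = u by [].
apply: psum_inj => b; apply/eqP; rewrite eqn_leq hle andbT.
by move/existsPn: hnone => /(_ b); rewrite -leqNgt.
Qed.

End BorelClosure.

Section Letterplace.
Variables (k : fieldType) (m : nat).

Lemma proj_genE (psi : 'I_m -> nat) : proj_gen k psi = 'X_[ascent_mnm psi].
Proof. by rewrite /proj_gen mpolyXE_id; apply: eq_bigr => a _; rewrite mnmE. Qed.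

Lemma Lp1E (J : ('I_m -> nat) -> Prop) p :
  Lp1 k J p <-> ideal_genX (fun mu => compl_hom J (psum mu)) p.
Proof.
apply: eq_ideal_gen => q; split.
  case=> psi [[hh hn] ->]; exists (ascent_mnm psi).
  by rewrite proj_genE psum_ascent_mnm.
by case=> mu [hmu ->]; exists (psum mu); rewrite proj_genE ascent_mnm_psum.
Qed.

Lemma Lp1_monomial (J : ('I_m -> nat) -> Prop) : monomial_ideal (Lp1 k J).
Proof. by eexists => p; apply: Lp1E. Qed.

Lemma Lp1_X (J : ('I_m -> nat) -> Prop) u :
  poset_ideal J -> Lp1 k J 'X_[u] <-> ~ J (psum u).
Proof.
move=> [_ hdown]; rewrite Lp1E ideal_genX_X; split.
  by case=> v [_ hv] hvu hu; apply/hv/(hdown _ _ (psum_hom v) hu)/psum_le.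
by exists u; [split; first exact: psum_hom | exact: lepm_refl].
Qed.

Lemma poset_idealE (J : ('I_m -> nat) -> Prop) psi : poset_ideal J ->
  J psi <-> is_hom psi /\ ~ Lp1 k J 'X_[ascent_mnm psi].
Proof.
move=> hJ; rewrite Lp1_X //; split=> [hpsi | [hpsi /NNPP]].
  by have hh := hJ.1 _ hpsi; split=> //; rewrite psum_ascent_mnm.
by rewrite psum_ascent_mnm.
Qed.

End Letterplace.

Definition borel_poset_ideal (k : fieldType) (m : nat) (I : {mpoly k[m]} -> Prop)
  (psi : 'I_m -> nat) : Prop := is_hom psi /\ ~ I 'X_[ascent_mnm psi].

Lemma poset_ideal_borel (k : fieldType) (m : nat) (I : {mpoly k[m]} -> Prop) :
  strongly_stable I -> poset_ideal (borel_poset_ideal I).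
Proof.
move=> [hmono hB]; have [_ [_ hM]] := monomial_ideal_is_ideal hmono.
split=> [psi [] // | phi psi hphi [hpsi hn] hle]; split=> // hI; apply: hn.
by apply: (borel_closed_psum hM hB _ hI); rewrite !psum_ascent_mnm.
Qed.

Theorem theorem6p1 (k : fieldType) (m : nat) (hm : (0 < m)%N) :
  (forall J : ('I_m -> nat) -> Prop, poset_ideal J -> strongly_stable (Lp1 k J)) /\
  (forall J1 J2 : ('I_m -> nat) -> Prop, poset_ideal J1 -> poset_ideal J2 ->
     (forall p, Lp1 k J1 p <-> Lp1 k J2 p) -> (forall psi, J1 psi <-> J2 psi)) /\
  (forall I : {mpoly k[m]} -> Prop, strongly_stable I ->
     exists J : ('I_m -> nat) -> Prop, poset_ideal J /\ (forall p, Lp1 k J p <-> I p)).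
Proof.
split; [|split].
- move=> J hJ; split=> [|u i j hij]; first exact: Lp1_monomial.
  rewrite -!mpolyXD !Lp1_X // => hnj hi; apply: hnj.
  by apply: hJ.2 hi _; [apply: psum_hom | apply: psum_borel].
- move=> J1 J2 h1 h2 hL psi; rewrite (poset_idealE _ psi h1) (poset_idealE _ psi h2).
  by split=> [] [hh hn]; split=> // /hL.
- move=> I hI; exists (borel_poset_ideal I); have hJ := poset_ideal_borel hI.
  split=> //; apply: eq_monomial_ideal; [exact: Lp1_monomial | exact: hI.1 |].
  move=> u; rewrite Lp1_X // /borel_poset_ideal ascent_mnm_psum.
  by have := classic (I 'X_[u]); have := psum_hom u; tauto.
Qed.
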